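(* Let $X$ be a shift space and let $C$ be a right asymptotic class of $X$. Then $$\omega(C)=\sum_{u\in LS_\omega(C)}\bigl(\ell_C(u)-1\bigr),$$ where the left-hand side is finite if and only if the right-hand side is finite.
   Context: $A$ is a finite alphabet; a shift space is a closed shift-invariant subset $X\subseteq A^{\mathbb Z}$. For $x\in A^{\mathbb Z}$ write $x^+=x_0x_1\cdots\in A^{\mathbb N}$ and $X^+=\{x^+:x\in X\}$. Two elements $x,y\in X$ are right asymptotically equivalent if there are shifts $x'=\sigma^i(x)$, $y'=\sigma^j(y)$ ($i,j\in\mathbb Z$) with $x'^+=y'^+$. Each equivalence class is a union of orbits; a right asymptotic class is an equivalence class containing more than one orbit. For such a class $C$, $\omega(C)=\mathrm{Card}(o(C))-1$ where $o(C)$ is the set of orbits contained in $C$ (possibly infinite). For $u\in X^+$, $\ell_C(u)=\mathrm{Card}\{a\in A: x^+=au \text{ for some } x\in C\}$, and $LS_\omega(C)$ is the set of right infinite words $u$ with $\ell_C(u)\ge 2$. *)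

From mathcomp Require Import all_boot.
From Stdlib Require Import ZArith List ClassicalEpsilon.
Set Implicit Arguments. Unset Strict Implicit. Unset Printing Implicit Defensive.

Section Shifts.
Variable A : finType.

Definition shiftk (k : Z) (x : Z -> A) : Z -> A := fun i => x (i + k)%Z.

(* closed in the product topology: every x all of whose central windows
   occur in elements of X belongs to X *)
Definition closed_set (X : (Z -> A) -> Prop) : Prop :=
  forall x, (forall n : nat, exists y, X y /\
     forall i : Z, (Z.abs i <= Z.of_nat n)%Z -> y i = x i) -> X x.

Definition shift_invariant (X : (Z -> A) -> Prop) : Prop :=
  forall x (k : Z), X x -> X (shiftk k x).

Definition shift_space (X : (Z -> A) -> Prop) : Prop :=
  closed_set X /\ shift_invariant X.

Definition rpart (x : Z -> A) : nat -> A := fun n => x (Z.of_nat n).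

Definition same_orbit (x y : Z -> A) : Prop := exists k : Z, forall i, y i = shiftk k x i.

Definition right_asym (x y : Z -> A) : Prop :=
  exists i j : Z, forall n : nat, rpart (shiftk i x) n = rpart (shiftk j y) n.

Definition right_asym_class (X C : (Z -> A) -> Prop) : Prop :=
  (exists x0, X x0 /\ forall y, C y <-> (X y /\ right_asym x0 y)) /\
  (exists x y, C x /\ C y /\ ~ same_orbit x y).

Definition orbit_card (C : (Z -> A) -> Prop) (n : nat) : Prop :=
  exists l : list (Z -> A), length l = n /\ Forall C l /\
    ForallOrdPairs (fun x y => ~ same_orbit x y) l /\
    forall x, C x -> Exists (fun y => same_orbit x y) l.

(* omega(C) = Card(o(C)) - 1, in N u {infinity} (None = infinity) *)
Definition omega_is (C : (Z -> A) -> Prop) (w : option nat) : Prop :=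
  match w with
  | Some n => orbit_card C n.+1
  | None => forall m, ~ orbit_card C m
  end.

Definition pbool (P : Prop) : bool :=
  if excluded_middle_informative P then true else false.

Definition ellC (C : (Z -> A) -> Prop) (u : nat -> A) : nat :=
  #|[pred a : A | pbool (exists x, C x /\ rpart x 0 = a /\
                          forall k : nat, rpart x k.+1 = u k)]|.

Definition ext_eq (u v : nat -> A) : Prop := forall k, u k = v k.

(* the sum over u in LS_omega(C) of (ell_C(u) - 1) equals n :
   LS_omega(C) is finite, enumerated (up to extensional equality,
   without repetition) by l, and the sum over l is n *)
Definition LS_sum (C : (Z -> A) -> Prop) (n : nat) : Prop :=
  exists l : list (nat -> A),
    ForallOrdPairs (fun u v => ~ ext_eq u v) l /\
    (forall u, In u l -> 2 <= ellC C u) /\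
    (forall u, 2 <= ellC C u -> exists v, In v l /\ ext_eq u v) /\
    sumn (map (fun u => ellC C u - 1) l) = n.

Definition LS_sum_is (C : (Z -> A) -> Prop) (w : option nat) : Prop :=
  match w with
  | Some n => LS_sum C n
  | None => forall m, ~ LS_sum C m
  end.

End Shifts.

(* Fix a tail [base] of [x0] far to the right; every point of [C] eventually reads [base].
   Consider the tree whose nodes are the words [w] with [w base] in [C^+] and no earlier
   occurrence of [base] in [w base]: a node [w] has [ellC (w base)] one-letter extensions,
   each a node of the next level except at most one, which closes a period of [base] and
   returns to the root. Counting level by level, [#nodes of level N + #returns] equals
   [1 + sum of (ellC - 1)] over the nodes of lower levels. For large [N] the nodes of
   level [N] are the left words of the orbits passing through [base] with a first pass,
   the sum runs over [LS_omega(C)], and a return happens iff [base] is periodic, i.e. iff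
   the periodic point of [base] -- the only orbit without a first pass -- belongs to [C]. *)

From mathcomp Require Import all_boot.
From Stdlib Require Import ZArith List.
From Stdlib Require Import Lia FunctionalExtensionality Classical ClassicalEpsilon.
From mathcomp Require Import zify.
Set Implicit Arguments. Unset Strict Implicit. Unset Printing Implicit Defensive.

Section ListFacts.
Variable T : Type.

Lemma length_size (l : list T) : length l = size l.
Proof. by elim: l => //= a l ->. Qed.

Lemma map_List (U : Type) (f : T -> U) (l : list T) : List.map f l = seq.map f l.
Proof. by elim: l => //= a l ->. Qed.

Lemma filter_List (b : pred T) (l : list T) : List.filter b l = seq.filter b l.
Proof. by elim: l => //= a l ->. Qed.

Lemma In_mem (U : eqType) (x : U) (s : list U) : In x s <-> x \in s.
Proof.
elim: s => //= a s IH; rewrite seq.in_cons.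
by split=> [[->|/IH ->]|/orP[/eqP ->|/IH]]; rewrite ?eqxx ?orbT; auto.
Qed.

Lemma mem_map_In (U : eqType) (f : T -> U) (l : list T) w :
  w \in seq.map f l -> exists2 y, In y l & w = f y.
Proof.
elim: l => //= a l IH; rewrite seq.in_cons => /orP[/eqP ->|/IH [y y_in ->]].
  by exists a; [left|].
by exists y; [right|].
Qed.

Variable E : T -> T -> Prop.
Hypothesis E_sym : forall u v, E u v -> E v u.
Hypothesis E_trans : forall u v w, E u v -> E v w -> E u w.

Lemma sumn_map_le_cover (g : T -> nat) (l1 l2 : list T) :
  (forall u v, E u v -> g u = g v) ->
  ForallOrdPairs (fun u v => ~ E u v) l1 ->
  (forall u, In u l1 -> 0 < g u -> exists v, In v l2 /\ E u v) ->
  sumn (List.map g l1) <= sumn (List.map g l2).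
Proof.
move=> gE; elim: l1 l2 => [|u l1 IH] l2 //= l1_dist cover.
inversion l1_dist as [|? ? u_dist l1_dist']; subst.
have [g0|gu_pos] := posnP (g u).
  by rewrite g0 add0n; apply: IH => // v hv; apply: cover; right.
have [v [v_in Euv]] := cover u (or_introl erefl) gu_pos.
have [l2a [l2b l2E]] := in_split _ _ v_in; subst l2.
have -> : sumn (List.map g (l2a ++ v :: l2b)) = g v + sumn (List.map g (l2a ++ l2b)).
  rewrite !map_app !sumn_cat /=; lia.
rewrite (gE _ _ Euv) leq_add2l; apply: IH => // u' u'_in gu'_pos.
have [v' [v'_in Eu'v']] := cover u' (or_intror u'_in) gu'_pos.
exists v'; split => //.
have [|[v'v|]] := in_app_or _ _ _ v'_in; try by move=> h; apply: in_or_app; auto.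
subst v'; case: (proj1 (Forall_forall _ _) u_dist u' u'_in).
exact: E_trans Euv (E_sym Eu'v').
Qed.

Lemma length_le_cover (l1 l2 : list T) :
  ForallOrdPairs (fun u v => ~ E u v) l1 ->
  (forall u, In u l1 -> exists v, In v l2 /\ E u v) ->
  length l1 <= length l2.
Proof.
move=> l1_dist cover.
have len : forall l : list T, length l = sumn (List.map (fun _ => 1) l) by elim=> //= a l ->.
rewrite !len; apply: sumn_map_le_cover => // u hu _; exact: cover.
Qed.

Lemma length_le1_related (l : list T) :
  ForallOrdPairs (fun x y => ~ E x y) l -> (forall x y, In x l -> In y l -> E x y) ->
  length l <= 1.
Proof.
case: l => [|a [|b l]] //= l_dist rel.
inversion l_dist as [|? ? a_dist _]; inversion a_dist as [|? ? not_Eab _]; subst.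
by case: not_Eab; apply: rel; [left|right; left].
Qed.

End ListFacts.

Lemma eventually_forall_In (T : Type) (P : nat -> T -> Prop) (l : list T) :
  (forall x, In x l -> exists N0, forall N, N0 <= N -> P N x) ->
  exists N0, forall N, N0 <= N -> forall x, In x l -> P N x.
Proof.
elim: l => [|a l IH] ev; first by exists 0.
have [Na Ha] := ev a (or_introl erefl).
have [Nl Hl] := IH (fun x hx => ev x (or_intror hx)).
exists (maxn Na Nl) => N; rewrite geq_max => /andP[leNa leNl] x [<-|hx]; auto.
Qed.

Lemma ForallOrdPairs_eventually (T : Type) (P : T -> T -> Prop) (Q : nat -> T -> T -> Prop)
    (l : list T) :
  (forall a b, P a b -> exists N0, forall N, N0 <= N -> Q N a b) ->
  ForallOrdPairs P l -> exists N0, forall N, N0 <= N -> ForallOrdPairs (Q N) l.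
Proof.
move=> PQ; elim: l => [|a l IH] l_P; first by exists 0 => N _; constructor.
inversion l_P as [|? ? a_P l_P']; subst.
have [N1 H1] := IH l_P'.
have [N2 H2] := eventually_forall_In (fun x hx => PQ a x (proj1 (Forall_forall _ _) a_P x hx)).
exists (maxn N1 N2) => N; rewrite geq_max => /andP[leN1 leN2].
by constructor; [apply/Forall_forall => x hx; exact: H2|exact: H1].
Qed.

Lemma list_choice (T U : Type) (R : T -> U -> Prop) (l : list T) :
  (forall t, In t l -> exists u, R t u) -> exists l', Forall2 R l l'.
Proof.
elim: l => [|a l IH] H; first by exists nil.
have [u hu] := H a (or_introl erefl).
have [l' hl'] := IH (fun t ht => H t (or_intror ht)).
by exists (u :: l'); constructor.
Qed.

Lemma Forall2_In_r (T U : Type) (R : T -> U -> Prop) l l' :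
  Forall2 R l l' -> forall y, In y l' -> exists x, In x l /\ R x y.
Proof.
elim=> [|a b l0 l0' hab _ IH] y //= [<-|hy]; first by exists a; split; [left|].
by have [x [hx r]] := IH y hy; exists x; split; [right|].
Qed.

Lemma ForallOrdPairs_Forall2 (T U : Type) (R : T -> U -> Prop) (P : T -> T -> Prop)
    (Q : U -> U -> Prop) (l : list T) (l' : list U) :
  (forall a b a' b', R a a' -> R b b' -> P a b -> Q a' b') ->
  Forall2 R l l' -> ForallOrdPairs P l -> ForallOrdPairs Q l'.
Proof.
move=> PQ; elim=> [|a a' l0 l0' Raa' Rl IH] l_P; first by constructor.
inversion l_P as [|? ? a_P l_P']; subst; constructor; last exact: IH.
elim: Rl a_P {IH l_P l_P'} => [|b b' l1 l1' Rbb' _ IH] a_P; first by constructor.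
by inversion a_P; subst; constructor; [exact: PQ Raa' Rbb' _|exact: IH].
Qed.

Lemma ForallOrdPairs_map (T U : Type) (f : T -> U) (P : T -> T -> Prop) (Q : U -> U -> Prop)
    (l : list T) :
  (forall a b, In a l -> In b l -> P a b -> Q (f a) (f b)) ->
  ForallOrdPairs P l -> ForallOrdPairs Q (List.map f l).
Proof.
elim: l => [|a l IH] PQ l_P /=; first by constructor.
inversion l_P as [|? ? a_P l_P']; subst; constructor.
  apply/Forall_forall => y /in_map_iff [b [<- hb]].
  by apply: PQ; [left|right|exact: (proj1 (Forall_forall _ _) a_P b hb)].
by apply: IH => // x y hx hy; apply: PQ; right.
Qed.

Lemma ForallOrdPairs_filter (T : Type) (P : T -> T -> Prop) (b : pred T) (l : list T) :
  ForallOrdPairs P l -> ForallOrdPairs P (List.filter b l).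
Proof.
elim: l => [|a l IH] l_P //=; inversion l_P as [|? ? a_P l_P']; subst.
case: (b a); last exact: IH.
constructor; last exact: IH.
by apply/Forall_forall => x /filter_In [hx _]; exact: (proj1 (Forall_forall _ _) a_P x hx).
Qed.

Lemma length_filter_predC (T : Type) (b : pred T) (l : list T) :
  length (List.filter b l) + length (List.filter (predC b) l) = length l.
Proof. by elim: l => //= a l IH; case: (b a) => /=; lia. Qed.

Lemma uniq_ForallOrdPairs (U : eqType) (s : list U) :
  uniq s <-> ForallOrdPairs (fun a b => a <> b) s.
Proof.
elim: s => [|a s IH] /=; first by split=> // _; constructor.
split=> [/andP[a_s /IH s_dist]|s_dist].
  constructor => //; apply/Forall_forall => x /In_mem x_s ax.
  by move: a_s; rewrite ax x_s.
inversion s_dist as [|? ? a_dist s_dist']; subst.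
rewrite (proj2 IH s_dist') andbT; apply/negP => /In_mem a_s.
exact: (proj1 (Forall_forall _ _) a_dist a a_s).
Qed.

Lemma uniq_map_ForallOrdPairs (T : Type) (U : eqType) (f : T -> U) (l : list T) :
  ForallOrdPairs (fun a b => f a <> f b) l -> uniq (seq.map f l).
Proof.
move=> l_dist; apply/uniq_ForallOrdPairs; rewrite -map_List.
by apply: ForallOrdPairs_map l_dist.
Qed.

Lemma pboolP (P : Prop) : reflect P (pbool P).
Proof. by rewrite /pbool; case: excluded_middle_informative => h; constructor. Qed.

Lemma pbool_true (P : Prop) : P -> pbool P = true.
Proof. by move/pboolP. Qed.

Lemma sum_nat_gt0_exists (I : finType) (f : I -> nat) : 0 < \sum_i f i -> exists i, 0 < f i.
Proof.
by rewrite lt0n sum_nat_eq0 => /forallPn [i]; rewrite -lt0n; exists i.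
Qed.

Lemma sum_bool_le1 (I : finType) (b : pred I) :
  (forall p q, b p -> b q -> p = q) -> \sum_p (b p : nat) <= 1.
Proof.
move=> b_uniq; have [p bp|b0] := pickP b; last by rewrite big1 // => i _; rewrite b0.
rewrite (bigD1 p) //= bp big1 // => q /negPf nqp.
by case bq: (b q) => //; rewrite (b_uniq _ _ bq bp) eqxx in nqp.
Qed.

Lemma sum_ord_le1 (f : nat -> nat) N : (forall n, f n <= 1) ->
  (forall n m, 0 < f n -> 0 < f m -> n = m) -> \sum_(n < N) f n <= 1.
Proof.
move=> f_le1 f_uniq; elim: N => [|N IH]; first by rewrite big_ord0.
rewrite big_ord_recr /=; have [->|fN] := posnP (f N); first by rewrite addn0.
rewrite big1 ?add0n // => i _; have [//|fi] := posnP (f i).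
by move: (ltn_ord i); rewrite (f_uniq _ _ fi fN) ltnn.
Qed.

Section AsymptoticClass.
Variable A : finType.
Variables X C : (Z -> A) -> Prop.
Hypothesis HX : shift_space X.
Variable x0 : Z -> A.
Hypothesis X_x0 : X x0.
Hypothesis C_def : forall y, C y <-> X y /\ right_asym x0 y.

Definition in_Cplus (u : nat -> A) := exists x, C x /\ forall n : nat, x (Z.of_nat n) = u n.
Definition extends (u : nat -> A) (a : A) :=
  exists x, C x /\ rpart x 0 = a /\ forall k, rpart x k.+1 = u k.
Definition branching (u : nat -> A) := ellC C u - 1.
Definition sdrop (m : nat) (u : nat -> A) : nat -> A := fun n => u (n + m).
Definition scons (a : A) (u : nat -> A) : nat -> A := fun n => if n is k.+1 then u k else a.

Lemma ellC_sum u : ellC C u = \sum_(a : A) pbool (extends u a).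
Proof.
rewrite /ellC -sum1_card big_mkcond /=; apply: eq_bigr => a _.
by rewrite inE; case: pbool.
Qed.

Lemma C_shift k x : C x -> C (shiftk k x).
Proof.
move/C_def => [Xx [i [j ij]]]; apply/C_def; split; first exact: (proj2 HX).
exists i, (j - k)%Z => n; rewrite ij /rpart /shiftk; congr x; lia.
Qed.

Lemma C_x0 : C x0.
Proof. by apply/C_def; split => //; exists 0%Z, 0%Z. Qed.

Lemma same_orbit_sym (x y : Z -> A) : same_orbit x y -> same_orbit y x.
Proof. by move=> [k hk]; exists (- k)%Z => i; rewrite /shiftk hk /shiftk; congr x; lia. Qed.

Lemma same_orbit_trans (x y w : Z -> A) : same_orbit x y -> same_orbit y w -> same_orbit x w.
Proof.
by move=> [k hk] [k' hk']; exists (k' + k)%Z => i; rewrite hk' /shiftk hk /shiftk; congr x; lia.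
Qed.

Lemma in_Cplus_sdrop m u : in_Cplus u -> in_Cplus (sdrop m u).
Proof.
move=> [x [Cx xu]]; exists (shiftk (Z.of_nat m) x); split; first exact: C_shift.
by move=> n; rewrite /shiftk /sdrop -xu Nat2Z.inj_add.
Qed.

Lemma in_Cplus_scons a u : in_Cplus (scons a u) <-> extends u a.
Proof.
split=> [[x [Cx xu]]|[x [Cx [x0a xu]]]].
  by exists x; split => //; split => [|k]; rewrite /rpart xu.
by exists x; split => // -[|n] /=; [exact: x0a|exact: xu n].
Qed.

Lemma in_Cplus_extends u a : extends u a -> in_Cplus u.
Proof.
move=> [x [Cx [_ xu]]]; exists (shiftk 1 x); split; first exact: C_shift.
by move=> n; rewrite /shiftk -xu /rpart Nat2Z.inj_succ.
Qed.

Lemma ellC_gt0 u : in_Cplus u -> 0 < ellC C u.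
Proof.
move=> [x [Cx xu]]; rewrite ellC_sum.
have ext : extends u (x (-1)%Z).
  exists (shiftk (-1) x); split; first exact: C_shift.
  by split => // k; rewrite /rpart /shiftk -xu; congr x; lia.
by rewrite (bigD1 (x (-1)%Z)) //= pbool_true.
Qed.

Lemma sdrop0 u : sdrop 0 u = u.
Proof. by apply: functional_extensionality => n; rewrite /sdrop addn0. Qed.

Lemma sdropS m a u : sdrop m.+1 (scons a u) = sdrop m u.
Proof. by apply: functional_extensionality => n; rewrite /sdrop addnS. Qed.

Lemma sdrop_sdrop m k u : sdrop m (sdrop k u) = sdrop (m + k) u.
Proof. by apply: functional_extensionality => n; rewrite /sdrop addnA. Qed.

(* Words of length [N], as nested pairs so that they form a finType. *)
Fixpoint word (N : nat) : finType := if N is n.+1 then (A * word n)%type else unit.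

Fixpoint wcat (N : nat) : word N -> (nat -> A) -> nat -> A :=
  match N as N0 return word N0 -> (nat -> A) -> nat -> A with
  | 0 => fun _ u => u
  | n.+1 => fun w u k => if k is k'.+1 then wcat w.2 u k' else w.1
  end.

Fixpoint wtake (N : nat) (u : nat -> A) : word N :=
  match N as N0 return word N0 with 0 => tt | n.+1 => (u 0, wtake n (sdrop 1 u)) end.

Lemma wcatS N (w : word N.+1) u : wcat w u = scons w.1 (wcat (w.2 : word N) u).
Proof. by apply: functional_extensionality => -[]. Qed.

Lemma sdrop_wcat N (w : word N) u : sdrop N (wcat w u) = u.
Proof. by elim: N w => [|N IH] w; [exact: sdrop0|rewrite wcatS sdropS IH]. Qed.

Lemma wcat_inj N (w w' : word N) u : wcat w u = wcat w' u -> w = w'.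
Proof.
elim: N w w' => [|N IH]; first by do 2 case.
move=> [a w] [a' w']; rewrite !wcatS /= => e.
have -> : a = a' by have := congr1 (fun f => f 0) e.
suff -> : w = w' by [].
by apply: IH; apply: functional_extensionality => k; exact: (congr1 (fun f => f k.+1) e).
Qed.

Lemma wcat_wtake N u : wcat (wtake N u) (sdrop N u) = u.
Proof.
elim: N u => [|N IH] u; first by rewrite sdrop0.
rewrite wcatS; apply: functional_extensionality => -[|k] //=.
have -> : sdrop N.+1 u = sdrop N (sdrop 1 u) by rewrite sdrop_sdrop addn1.
by rewrite IH /sdrop addn1.
Qed.

Lemma sum_wordS N (F : word N.+1 -> nat) :
  \sum_(w : word N.+1) F w = \sum_(a : A) \sum_(w : word N) F (a, w).
Proof. by rewrite pair_big /=; apply: eq_bigr => -[]. Qed.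

(** * The tree of left extensions of a tail of [x0] *)

Section Base.
Variable J : nat.

Definition base : nat -> A := fun n => x0 (Z.of_nat n + Z.of_nat J)%Z.

Lemma in_Cplus_base : in_Cplus base.
Proof. by exists (shiftk (Z.of_nat J) x0); split; [exact: C_shift C_x0|]. Qed.

Definition node N (w : word N) :=
  in_Cplus (wcat w base) /\ forall m, m < N -> sdrop m (wcat w base) <> base.
Definition nodeb N (w : word N) : bool := pbool (node w).
Definition nnodes N := \sum_(w : word N) (nodeb w : nat).
Definition level_branching N := \sum_(w : word N) nodeb w * branching (wcat w base).
(* Number of edges from level [N] back to the root: nonzero exactly when
   [N.+1] is the least period of [base]. *)
Definition returns N := \sum_(w : word N) \sum_(a : A)
   (pbool (node w /\ extends (wcat w base) a /\ scons a (wcat w base) = base) : nat).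

Lemma nodeS N (w : word N.+1) : node w <->
  node (w.2 : word N) /\ extends (wcat (w.2 : word N) base) w.1 /\
  scons w.1 (wcat (w.2 : word N) base) <> base.
Proof.
rewrite /node wcatS; split.
  move=> [in_C no_base]; have ext := proj1 (in_Cplus_scons _ _) in_C.
  split; [split; first exact: in_Cplus_extends ext|split => //].
    by move=> m lt_mN; rewrite -(sdropS m w.1); apply: no_base.
  by move=> e; apply: (no_base 0) => //; rewrite sdrop0.
move=> [[_ no_base] [ext ne]]; split; first exact/in_Cplus_scons.
by case=> [_|m lt_mN]; [rewrite sdrop0|rewrite sdropS; apply: no_base].
Qed.

(* The [ellC] extensions of a node of level [N] are nodes of level [N.+1] or returns. *)
Lemma nnodesS N : nnodes N.+1 + returns N = nnodes N + level_branching N.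
Proof.
have -> : nnodes N.+1 + returns N = \sum_(a : A) \sum_(w : word N)
    (nodeb ((a, w) : word N.+1) +
     pbool (node w /\ extends (wcat w base) a /\ scons a (wcat w base) = base)).
  rewrite /nnodes /returns sum_wordS [X in _ + X]exchange_big -big_split /=.
  by apply: eq_bigr => a _; rewrite -big_split.
have -> : nnodes N + level_branching N =
    \sum_(a : A) \sum_(w : word N) nodeb w * pbool (extends (wcat w base) a).
  rewrite exchange_big /nnodes /level_branching -big_split /=; apply: eq_bigr => w _.
  rewrite -big_distrr /= -ellC_sum /nodeb /branching.
  by case: (pboolP (node w)) => [[in_C _]|] //=; have := ellC_gt0 in_C; lia.
apply: eq_bigr => a _; apply: eq_bigr => w _.
have := nodeS ((a, w) : word N.+1); rewrite /nodeb /=.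
by do 4 case: pboolP; tauto.
Qed.

Lemma nnodes0 : nnodes 0 = 1.
Proof.
rewrite /nnodes (big_pred1 tt); last by case.
by rewrite /nodeb pbool_true //; split; [exact: in_Cplus_base|].
Qed.

Lemma nnodes_telescope N :
  nnodes N + \sum_(n < N) returns n = 1 + \sum_(n < N) level_branching n.
Proof.
elim: N => [|N IH]; first by rewrite !big_ord0 nnodes0.
by rewrite !big_ord_recr /= [_ + returns N]addnC addnA nnodesS addnAC IH -addnA.
Qed.

Lemma returns_gt0 N : 0 < returns N ->
  sdrop N.+1 base = base /\ forall m, 0 < m -> m <= N -> sdrop m base <> base.
Proof.
move=> /sum_nat_gt0_exists [w] /sum_nat_gt0_exists [a].
case: pboolP => // -[[_ no_base] [_ ret]] _.
have e1 : wcat w base = sdrop 1 base by rewrite -[in RHS]ret sdropS sdrop0.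
split; first by rewrite -{1}ret sdropS sdrop_wcat.
by case=> // m _ le_mN; rewrite -addn1 -sdrop_sdrop -e1; apply: no_base.
Qed.

Lemma returns_le1 N : returns N <= 1.
Proof.
rewrite /returns pair_big /=; apply: sum_bool_le1 => -[w a] [w' a'] /=.
move=> /pboolP [_ [_ ret]] /pboolP [_ [_ ret']]; have e := etrans ret' (esym ret).
have -> : a' = a by have := congr1 (fun f => f 0) e.
suff /wcat_inj -> : wcat w' base = wcat w base by [].
by apply: functional_extensionality => k; exact: (congr1 (fun f => f k.+1) e).
Qed.

Lemma sum_returns_le1 N : \sum_(n < N) returns n <= 1.
Proof.
apply: sum_ord_le1; first exact: returns_le1.
move=> n m /returns_gt0 [per_n min_n] /returns_gt0 [per_m min_m].
by case: (ltngtP n m) => // lt; [case: (min_m n.+1)|case: (min_n m.+1)].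
Qed.

Lemma sum_returns_ge1 N q : 0 < q -> q <= N -> sdrop q base = base ->
  1 <= \sum_(n < N) returns n.
Proof.
move=> q_gt0 le_qN per_q.
have ex_per : exists q, (0 < q) && pbool (sdrop q base = base).
  by exists q; rewrite q_gt0 pbool_true.
case: (ex_minnP ex_per) => -[//|p] /andP[_ /pboolP per_p] min_p.
have p_min : forall m, m < p -> sdrop m.+1 base <> base.
  move=> m lt_mp per_m; have := min_p m.+1; rewrite pbool_true //.
  by move=> /(_ isT); rewrite ltnS leqNgt lt_mp.
have wtake_base : wcat (wtake p (sdrop 1 base)) base = sdrop 1 base.
  by have := wcat_wtake p (sdrop 1 base); rewrite sdrop_sdrop addn1 per_p.
have ret : scons (base 0) (sdrop 1 base) = base.
  by apply: functional_extensionality => -[|k] //=; rewrite /sdrop addn1.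
have returns_p : 0 < returns p.
  rewrite /returns (bigD1 (wtake p (sdrop 1 base))) //= (bigD1 (base 0)) //= pbool_true //.
  rewrite /node wtake_base; split; last first.
    by split => //; apply/in_Cplus_scons; rewrite ret; exact: in_Cplus_base.
  split; first exact: in_Cplus_sdrop in_Cplus_base.
  by move=> m lt_mp; rewrite sdrop_sdrop addn1; apply: p_min.
have lt_pN : p < N by apply: leq_trans le_qN; apply: min_p; rewrite q_gt0 pbool_true.
by rewrite (bigD1 (Ordinal lt_pN)) //=; lia.
Qed.

Definition branching_total N := \sum_(n < N) level_branching n.

Definition node_words N : list (nat -> A) :=
  List.map (fun p : {n : 'I_N & word n} => wcat (tagged p) base)
    (List.filter (fun p => nodeb (tagged p)) (index_enum {n : 'I_N & word n})).

Lemma branching_total_node_words N :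
  branching_total N = sumn (List.map branching (node_words N)).
Proof.
rewrite /branching_total /level_branching /node_words.
transitivity (\sum_(n < N) \sum_(w : word n | nodeb w) branching (wcat w base)).
  apply: eq_bigr => n _; rewrite [RHS]big_mkcond; apply: eq_bigr => w _.
  by case: nodeb; rewrite ?mul1n ?mul0n.
rewrite (@sig_big_dep _ _ _ _ (fun n : 'I_N => word n) (fun _ => true) (fun _ w => nodeb w)
  (fun _ w => branching (wcat w base))) /=.
by rewrite -big_filter !map_List filter_List sumnE !big_map.
Qed.

Lemma node_length_inj n n' (w : word n) (w' : word n') :
  node w -> node w' -> wcat w base = wcat w' base -> n = n'.
Proof.
move=> [_ no_base] [_ no_base'] e.
case: (ltngtP n n') => // lt; [case: (no_base' n lt)|case: (no_base n' lt)].
  by rewrite -e sdrop_wcat.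
by rewrite e sdrop_wcat.
Qed.

Lemma ext_eqE (u v : nat -> A) : ext_eq u v <-> u = v.
Proof. by split => [|-> //]; exact: functional_extensionality. Qed.

Lemma node_words_distinct N : ForallOrdPairs (fun u v => ~ ext_eq u v) (node_words N).
Proof.
apply: (@ForallOrdPairs_map _ _ _ (fun a b => a <> b)); last first.
  rewrite filter_List -uniq_ForallOrdPairs filter_uniq //; exact: index_enum_uniq.
move=> [n w] [n' w'] /filter_In [_ node_w] /filter_In [_ node_w'] neq /ext_eqE /= e.
move: node_w node_w' => /pboolP node_w /pboolP node_w'.
have en : n = n' by apply: ord_inj; exact: node_length_inj node_w node_w' e.
by subst n'; apply: neq; rewrite (wcat_inj e).
Qed.

Lemma node_In_node_words N n (lt_nN : n < N) (w : word n) :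
  node w -> In (wcat w base) (node_words N).
Proof.
move=> node_w; apply/in_map_iff.
exists (existT (fun n : 'I_N => word n) (Ordinal lt_nN) w); split => //.
apply/filter_In; split; last by rewrite /nodeb pbool_true.
by apply/In_mem; exact: mem_index_enum.
Qed.

Lemma ext_eq_sym (u v : nat -> A) : ext_eq u v -> ext_eq v u.
Proof. by move=> /ext_eqE ->. Qed.

Lemma ext_eq_trans (u v w : nat -> A) : ext_eq u v -> ext_eq v w -> ext_eq u w.
Proof. by move=> /ext_eqE -> /ext_eqE ->. Qed.

Lemma branching_ext_eq (u v : nat -> A) : ext_eq u v -> branching u = branching v.
Proof. by move=> /ext_eqE ->. Qed.

Lemma branching_total_le N (L : list (nat -> A)) :
  (forall u, 1 < ellC C u -> exists v, In v L /\ ext_eq u v) ->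
  branching_total N <= sumn (List.map branching L).
Proof.
move=> L_cover; rewrite branching_total_node_words.
apply: (sumn_map_le_cover ext_eq_sym ext_eq_trans branching_ext_eq).
  exact: node_words_distinct.
by move=> u _ pos; apply: L_cover; rewrite /branching in pos; lia.
Qed.

Lemma branching_total_ge N (L : list (nat -> A)) :
  ForallOrdPairs (fun u v => ~ ext_eq u v) L ->
  (forall u, In u L -> exists n, n < N /\ exists w : word n, node w /\ wcat w base = u) ->
  sumn (List.map branching L) <= branching_total N.
Proof.
move=> L_dist L_nodes; rewrite branching_total_node_words.
apply: (sumn_map_le_cover ext_eq_sym ext_eq_trans branching_ext_eq) => // u u_in _.
have [n [lt_nN [w [node_w <-]]]] := L_nodes u u_in.
by exists (wcat w base); split; [exact: node_In_node_words|].
Qed.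

(** * Passes of points of [C] through [base] *)

Definition passes (x : Z -> A) (j : Z) := forall n : nat, x (Z.of_nat n + j)%Z = base n.

Fixpoint wleft (N : nat) (x : Z -> A) : word N :=
  match N as N0 return word N0 with 0 => tt | n.+1 => (x (- Z.of_nat n.+1)%Z, wleft n x) end.

Lemma wcat_wleft N x : passes x 0 -> wcat (wleft N x) base = fun k => x (Z.of_nat k - Z.of_nat N)%Z.
Proof.
move=> pass0; elim: N => [|N IH]; apply: functional_extensionality.
  by move=> k /=; rewrite -(pass0 k) Z.add_0_r Z.sub_0_r.
by rewrite (wcatS (wleft N.+1 x)) /= IH => -[|k]; rewrite /scons; congr x; lia.
Qed.

Lemma passes_shift j a x : passes (shiftk j x) a <-> passes x (a + j).
Proof. by split => h n; have := h n; rewrite /shiftk Z.add_assoc. Qed.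

Lemma node_wleft N y : C y -> passes y 0 ->
  (forall j, (- Z.of_nat N <= j < 0)%Z -> ~ passes y j) -> node (wleft N y).
Proof.
move=> Cy pass0 no_pass; rewrite /node wcat_wleft //; split.
  exists (shiftk (- Z.of_nat N) y); split; first exact: C_shift.
  by move=> n; rewrite /shiftk.
move=> m lt_mN e; apply: (no_pass (Z.of_nat m - Z.of_nat N)%Z); first lia.
by move=> n; have := congr1 (fun f => f n) e; rewrite /sdrop /= => <-; congr y; lia.
Qed.

Lemma node_wleft_no_pass N y : passes y 0 -> node (wleft N y) ->
  forall j, (- Z.of_nat N <= j < 0)%Z -> ~ passes y j.
Proof.
move=> pass0 [_ no_base] j j_range pass_j.
apply: (no_base (Z.to_nat (j + Z.of_nat N))); first lia.
rewrite wcat_wleft //; apply: functional_extensionality => n; rewrite /sdrop -(pass_j n).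
congr y; lia.
Qed.

Lemma passes_period y a : passes y 0 -> passes y a -> (a < 0)%Z ->
  sdrop (Z.to_nat (- a)) base = base.
Proof.
move=> pass0 pass_a a_neg; apply: functional_extensionality => n; rewrite /sdrop.
by rewrite -(pass_a (n + Z.to_nat (- a))) -(pass0 n); congr y; lia.
Qed.

Lemma passes_add_period y j p : passes y j -> sdrop p base = base -> passes y (j + Z.of_nat p).
Proof.
move=> pass_j per_p n; have := congr1 (fun f => f n) per_p; rewrite /sdrop => <-.
by rewrite -(pass_j (n + p)); congr y; lia.
Qed.

Lemma passes_in_window N p y j : 0 < p -> p <= N -> sdrop p base = base ->
  passes y j -> (j < 0)%Z -> exists j', (- Z.of_nat N <= j' < 0)%Z /\ passes y j'.
Proof.
move=> p_gt0 le_pN per_p; move: {2}(Z.to_nat (- j)) (leqnn (Z.to_nat (- j))) => m.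
elim: m j => [|m IH] j le_jm pass_j j_neg; first lia.
case: (Z_le_gt_dec (- Z.of_nat N) j) => j_range; first by exists j.
by apply: (IH (j + Z.of_nat p)%Z); [lia|exact: passes_add_period|lia].
Qed.

Definition period_le N :=
  forall q, 0 < q -> sdrop q base = base -> exists p, 0 < p /\ p <= N /\ sdrop p base = base.

Lemma node_wleft_first_pass N y j : passes y 0 -> node (wleft N y) -> period_le N ->
  passes y j -> ~ (j < 0)%Z.
Proof.
move=> pass0 node_y per_N pass_j j_neg.
case: (Z_le_gt_dec (- Z.of_nat N) j) => j_range.
  by apply: (node_wleft_no_pass pass0 node_y (j := j)) => //; lia.
have [p [p_gt0 [le_pN per_p]]] :=
  per_N (Z.to_nat (- j)) ltac:(lia) (passes_period pass0 pass_j j_neg).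
have [j' [j'_range pass_j']] := passes_in_window p_gt0 le_pN per_p pass_j j_neg.
exact: (node_wleft_no_pass pass0 node_y j'_range pass_j').
Qed.

Lemma same_orbit_wleft N y y' : passes y 0 -> passes y' 0 ->
  node (wleft N y) -> node (wleft N y') -> period_le N ->
  same_orbit y y' -> wleft N y = wleft N y'.
Proof.
move=> pass0 pass0' node_y node_y' per_N [k yk].
case: (Z.lt_trichotomy k 0) => [k_neg|[k0|k_pos]].
- case: (node_wleft_first_pass pass0 node_y per_N (j := k)) => // n.
  by rewrite -pass0' yk /shiftk; congr y; lia.
- suff -> : y' = y by [].
  by apply: functional_extensionality => i; rewrite yk /shiftk k0 Z.add_0_r.
- case: (node_wleft_first_pass pass0' node_y' per_N (j := (- k)%Z)); last lia.
  by move=> n; rewrite yk /shiftk -(pass0 n); congr y; lia.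
Qed.

Lemma sdrop_periodic p : sdrop p base = base -> forall n k, base (n + k * p) = base n.
Proof.
move=> per_p n; elim=> [|k IH]; first by rewrite mul0n addn0.
by rewrite mulSn addnCA addnC -[base (_ + _)]/(sdrop p base (n + k * p)) per_p.
Qed.

(* If [base] has period [p], the [p]-periodic point [pi] it determines lies in [X] (which
   is closed) and is right asymptotic to [x0]. *)
Lemma periodic_point p : 0 < p -> sdrop p base = base ->
  exists pi, C pi /\ passes pi 0 /\ forall i, pi (i + Z.of_nat p)%Z = pi i.
Proof.
move=> p_gt0 per_p.
pose pi := fun i : Z => base (Z.to_nat (i mod Z.of_nat p)).
have pi_base : forall (i : Z) (k : nat), (0 <= i + Z.of_nat k * Z.of_nat p)%Z ->
    pi i = base (Z.to_nat (i + Z.of_nat k * Z.of_nat p)).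
  move=> i k ik_ge0; rewrite /pi.
  have := Z_div_mod_eq_full i (Z.of_nat p).
  have := Z.mod_pos_bound i (Z.of_nat p) ltac:(lia).
  set r := (i mod Z.of_nat p)%Z; set q := (i / Z.of_nat p)%Z => r_range i_eq.
  have qk_ge0 : (0 <= q + Z.of_nat k)%Z by nia.
  have -> : Z.to_nat (i + Z.of_nat k * Z.of_nat p) = Z.to_nat r + Z.to_nat (q + Z.of_nat k) * p.
    by apply: Nat2Z.inj; rewrite Nat2Z.inj_add Nat2Z.inj_mul !Z2Nat.id; nia.
  by rewrite sdrop_periodic.
exists pi; split; [|split].
- apply/C_def; split.
    apply: (proj1 HX) => n; exists (shiftk (Z.of_nat J + Z.of_nat n * Z.of_nat p) x0).
    split; first exact: (proj2 HX).
    by move=> i i_range; rewrite (pi_base i n) /base /shiftk ?Z2Nat.id; try congr x0; nia.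
  exists (Z.of_nat J), 0%Z => n; rewrite /rpart /shiftk (pi_base _ 0) /base; last lia.
  by rewrite Z.add_0_r; congr x0; lia.
- by move=> n; rewrite (pi_base _ 0); [congr base|]; lia.
- move=> i; rewrite /pi; congr (base (Z.to_nat _)).
  by rewrite -{1}[Z.of_nat p]Z.mul_1_l Z_mod_plus_full.
Qed.

Lemma periodic_not_same_orbit N p pi y : 0 < p -> p <= N ->
  (forall i, pi (i + Z.of_nat p)%Z = pi i) ->
  passes y 0 -> node (wleft N y) -> ~ same_orbit pi y.
Proof.
move=> p_gt0 le_pN pi_per pass0 node_y [k yk].
apply: (node_wleft_no_pass pass0 node_y (j := (- Z.of_nat p)%Z)); first lia.
move=> n; rewrite -pass0 !yk /shiftk -(pi_per (Z.of_nat n + - Z.of_nat p + k)%Z).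
by congr pi; lia.
Qed.

Lemma node_of_in_Cplus u t : in_Cplus u -> sdrop t u = base ->
  exists n (w : word n), n <= t /\ node w /\ wcat w base = u.
Proof.
move=> in_C drop_t.
have ex_n : exists n, pbool (sdrop n u = base) by exists t; rewrite pbool_true.
case: (ex_minnP ex_n) => n /pboolP drop_n min_n.
have u_eq : wcat (wtake n u) base = u by have := wcat_wtake n u; rewrite drop_n.
exists n, (wtake n u); split; first by apply: min_n; rewrite pbool_true.
split => //; rewrite /node u_eq; split => // m lt_mn drop_m.
by have := min_n m; rewrite pbool_true // => /(_ isT); rewrite leqNgt lt_mn.
Qed.

Definition passes_bounded x := exists K, forall j, passes x j -> (K <= j)%Z.

Lemma first_pass_shift x j0 : C x -> passes x j0 -> passes_bounded x ->
  exists y, C y /\ same_orbit x y /\ passes y 0 /\ forall j, (j < 0)%Z -> ~ passes y j.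
Proof.
move=> Cx pass_j0 [K K_le].
have ex_m : exists m, pbool (passes x (K + Z.of_nat m)).
  exists (Z.to_nat (j0 - K)); apply: pbool_true.
  by have -> : (K + Z.of_nat (Z.to_nat (j0 - K)) = j0)%Z by have := K_le _ pass_j0; lia.
case: (ex_minnP ex_m) => m /pboolP pass_m min_m.
exists (shiftk (K + Z.of_nat m) x); split; first exact: C_shift.
split; first by exists (K + Z.of_nat m)%Z.
split; first by apply/passes_shift; rewrite Z.add_0_l.
move=> j j_neg /passes_shift pass_j; have := K_le _ pass_j => le_Kj.
have := min_m (Z.to_nat (j + Z.of_nat m)); rewrite pbool_true; first by move=> /(_ isT); lia.
by have -> : (K + Z.of_nat (Z.to_nat (j + Z.of_nat m)) = j + (K + Z.of_nat m))%Z by lia.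
Qed.

Lemma passes_unbounded x : ~ passes_bounded x -> forall K, exists j, passes x j /\ (j < K)%Z.
Proof.
move=> unbnd K; apply: NNPP => no_j; apply: unbnd; exists K => j pass_j.
by case: (Z_lt_le_dec j K) => // lt_jK; case: no_j; exists j.
Qed.

Lemma passes_unbounded_period x j1 b : passes x j1 -> passes x b -> (b < j1)%Z ->
  sdrop (Z.to_nat (j1 - b)) base = base.
Proof.
move=> pass_j1 pass_b lt_bj1.
have -> : (j1 - b = - (b - j1))%Z by lia.
apply: (@passes_period (shiftk j1 x)); last lia.
  by apply/passes_shift; rewrite Z.add_0_l.
by apply/passes_shift; rewrite Z.sub_add.
Qed.

(* A point passing through [base] arbitrarily far to the left coincides with the
   periodic point of [base]; so all such points share one orbit. *)
Lemma unbounded_same_orbit x x' : ~ passes_bounded x -> ~ passes_bounded x' -> same_orbit x x'.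
Proof.
move=> unbnd unbnd'.
have [j1 [pass_j1 _]] := passes_unbounded unbnd 0.
have [j2 [pass_j2 _]] := passes_unbounded unbnd' 0.
suff e : forall t, x (t + j1)%Z = x' (t + j2)%Z.
  exists (j1 - j2)%Z => i; rewrite /shiftk; have := e (i - j2)%Z.
  by rewrite Z.sub_add => <-; congr x; lia.
move=> t.
have [b [pass_b lt_b]] := passes_unbounded unbnd (Z.min (t + j1) j1).
have [b' [pass_b' lt_b']] := passes_unbounded unbnd' (Z.min (t + j2) j2).
have per := passes_unbounded_period pass_j1 pass_b ltac:(lia).
have per' := passes_unbounded_period pass_j2 pass_b' ltac:(lia).
have -> : x (t + j1)%Z = base (Z.to_nat (t + j1 - b)).
  by rewrite -(pass_b (Z.to_nat (t + j1 - b))); congr x; lia.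
have -> : x' (t + j2)%Z = base (Z.to_nat (t + j2 - b')).
  by rewrite -(pass_b' (Z.to_nat (t + j2 - b'))); congr x'; lia.
by rewrite -[in LHS]per' -[in RHS]per /sdrop; congr base; lia.
Qed.

Lemma unbounded_periodic x : ~ passes_bounded x -> exists q, 0 < q /\ sdrop q base = base.
Proof.
move=> unbnd; have [j1 [pass_j1 _]] := passes_unbounded unbnd 0.
have [b [pass_b lt_b]] := passes_unbounded unbnd j1.
by exists (Z.to_nat (j1 - b)); split; [lia|exact: passes_unbounded_period pass_b _].
Qed.

End Base.

(** * Counting orbits *)

Lemma passes_eventually x : C x ->
  exists I j0, forall J, I <= J -> passes J x (j0 + Z.of_nat J).
Proof.
move/C_def => [_ [i [j ij]]]; exists (Z.to_nat i), (j - i)%Z => J le_iJ n.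
have := ij (Z.to_nat (Z.of_nat n + Z.of_nat J - i)); rewrite /rpart /shiftk Z2Nat.id; last lia.
have -> : (Z.of_nat n + (j - i + Z.of_nat J) = Z.of_nat n + Z.of_nat J - i + j)%Z by lia.
by move <-; rewrite /base; congr x0; lia.
Qed.

Lemma nnodes_card J N : nnodes J N = #|[pred w : word N | nodeb J w]|.
Proof.
rewrite /nnodes -sum1_card [RHS]big_mkcond /=; apply: eq_bigr => w _.
by rewrite inE; case: nodeb.
Qed.

Lemma wleft_separates J y y' t N : passes J y 0 -> passes J y' 0 -> y t <> y' t ->
  Z.to_nat (- t) <= N -> wleft N y <> wleft N y'.
Proof.
move=> pass0 pass0' neq le_tN e; apply: neq.
case: (Z_lt_le_dec t 0) => t_sign.
  have := congr1 (fun f => f (Z.to_nat (t + Z.of_nat N))) (congr1 (fun w => wcat w (base J)) e).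
  rewrite /= (wcat_wleft N pass0) (wcat_wleft N pass0') Z2Nat.id; last lia.
  by rewrite Z.add_simpl_r.
by have := pass0 (Z.to_nat t); have := pass0' (Z.to_nat t); rewrite Z.add_0_r Z2Nat.id // => -> ->.
Qed.

(* Distinct orbits with a first pass through [base] are told apart by their left
   words of a common large length, and these words are nodes. *)
Lemma bounded_orbits_le_nnodes J (l : list (Z -> A)) :
  (forall x, In x l -> C x /\ passes_bounded J x /\ exists j, passes J x j) ->
  ForallOrdPairs (fun x y => ~ same_orbit x y) l ->
  exists N1, forall N, N1 <= N -> length l <= nnodes J N.
Proof.
move=> l_bnd l_dist.
have [ys l_ys] : exists ys, Forall2 (fun x y => C y /\ same_orbit x y /\ passes J y 0 /\
    forall j, (j < 0)%Z -> ~ passes J y j) l ys.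
  apply: list_choice => x /l_bnd [Cx [bnd [j pass_j]]]; exact: first_pass_shift pass_j bnd.
have ys_dist : ForallOrdPairs (fun y y' => (exists t, y t <> y' t) /\
    passes J y 0 /\ passes J y' 0) ys.
  apply: (ForallOrdPairs_Forall2 _ l_ys l_dist) =>
    x x' y y' [_ [xy [pass0 _]]] [_ [xy' [pass0' _]]] not_xx'.
  split => //; apply: NNPP => eq_yy'; apply: not_xx'.
  apply: same_orbit_trans xy _; apply: same_orbit_trans _ (same_orbit_sym xy').
  exists 0%Z => i; rewrite /shiftk Z.add_0_r; apply: NNPP => ne; apply: eq_yy'.
  by exists i => e; apply: ne; rewrite e.
have [N1 wleft_dist] : exists N1, forall N, N1 <= N ->
    ForallOrdPairs (fun y y' => wleft N y <> wleft N y') ys.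
  apply: (ForallOrdPairs_eventually _ ys_dist) => y y' [[t neq] [pass0 pass0']].
  by exists (Z.to_nat (- t)) => N; exact: wleft_separates.
exists N1 => N le_N1N; rewrite (Forall2_length l_ys) length_size -(size_map (wleft N)).
rewrite nnodes_card -(card_uniqP (uniq_map_ForallOrdPairs (wleft_dist N le_N1N))).
apply: subset_leq_card; apply/subsetP => w /mem_map_In [y y_in ->]; rewrite inE.
have [x [_ [Cy [_ [pass0 no_pass]]]]] := Forall2_In_r l_ys y_in.
by rewrite /nodeb pbool_true //; apply: node_wleft => // j j_range; apply: no_pass; lia.
Qed.

Lemma unbounded_orbits_le_returns J (l : list (Z -> A)) :
  (forall x, In x l -> ~ passes_bounded J x) ->
  ForallOrdPairs (fun x y => ~ same_orbit x y) l ->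
  exists N2, forall N, N2 <= N -> length l <= \sum_(n < N) returns J n.
Proof.
case: l => [|x l] l_unbnd l_dist; first by exists 0.
have [q [q_gt0 per_q]] := unbounded_periodic (l_unbnd x (or_introl erefl)).
exists q => N le_qN; apply: leq_trans (sum_returns_ge1 q_gt0 le_qN per_q).
apply: (length_le1_related l_dist) => y y' y_in y'_in.
by apply: unbounded_same_orbit; apply: l_unbnd.
Qed.

Theorem orbits_le_branching (L : list (nat -> A)) (l : list (Z -> A)) :
  (forall u, 1 < ellC C u -> exists v, In v L /\ ext_eq u v) ->
  Forall C l -> ForallOrdPairs (fun x y => ~ same_orbit x y) l ->
  length l <= (sumn (List.map branching L)).+1.
Proof.
move=> L_cover /Forall_forall l_C l_dist.
have [J l_pass] : exists J, forall x, In x l -> exists j, passes J x j.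
  suff [J ev] : exists J0, forall J, J0 <= J -> forall x, In x l -> exists j, passes J x j.
    by exists J; exact: ev.
  apply: eventually_forall_In => x /l_C /passes_eventually [I [j0 pass]].
  by exists I => J le_IJ; exists (j0 + Z.of_nat J)%Z; exact: pass.
pose bnd := fun x => pbool (passes_bounded J x).
have [N1 le_nnodes] : exists N1, forall N, N1 <= N ->
    length (List.filter bnd l) <= nnodes J N.
  apply: bounded_orbits_le_nnodes; last exact: ForallOrdPairs_filter.
  by move=> x /filter_In [x_in /pboolP bnd_x]; split; [exact: l_C|split; [|exact: l_pass]].
have [N2 le_returns] : exists N2, forall N, N2 <= N ->
    length (List.filter (predC bnd) l) <= \sum_(n < N) returns J n.
  apply: unbounded_orbits_le_returns; last exact: ForallOrdPairs_filter.
  by move=> x /filter_In [_ /= /pboolP].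
have le_N1 := le_nnodes (maxn N1 N2) (leq_maxl _ _).
have le_N2 := le_returns (maxn N1 N2) (leq_maxr _ _).
have := nnodes_telescope J (maxn N1 N2); have := branching_total_le J (maxn N1 N2) L_cover.
rewrite /branching_total -(length_filter_predC bnd); lia.
Qed.

Lemma period_le_eventually J N0 : exists N, N0 <= N /\ period_le J N.
Proof.
case: (classic (exists q, 0 < q /\ sdrop q (base J) = base J)) => [[q [q_gt0 per_q]]|aper].
  exists (maxn N0 q); split; first exact: leq_maxl.
  by move=> _ _ _; exists q; split => //; split => //; exact: leq_maxr.
by exists N0; split => // q q_gt0 per_q; case: aper; exists q.
Qed.

Lemma node_orbits J N : period_le J N -> exists ys,
  length ys = nnodes J N /\ Forall C ys /\ ForallOrdPairs (fun x y => ~ same_orbit x y) ys /\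
  forall y, In y ys -> passes J y 0 /\ node J (wleft N y).
Proof.
move=> per_N; pose ws := enum [pred w : word N | nodeb J w].
have [ys ws_ys] : exists ys,
    Forall2 (fun w y => C y /\ passes J y 0 /\ wleft N y = w /\ node J w) ws ys.
  apply: list_choice => w /In_mem; rewrite mem_enum inE => /pboolP node_w.
  have [x [Cx xw]] := proj1 node_w.
  have pass0 : passes J (shiftk (Z.of_nat N) x) 0.
    move=> n; rewrite /shiftk Z.add_0_r -Nat2Z.inj_add xw.
    exact: (congr1 (fun f => f n) (sdrop_wcat w (base J))).
  exists (shiftk (Z.of_nat N) x); split; first exact: C_shift.
  do 2 split => //; apply: (@wcat_inj _ _ _ (base J)); rewrite (wcat_wleft N pass0).
  by apply: functional_extensionality => k; rewrite /shiftk -xw; congr x; lia.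
exists ys; split.
  by rewrite -(Forall2_length ws_ys) length_size nnodes_card cardE.
split; first by apply/Forall_forall => y /(Forall2_In_r ws_ys) [w [_ []]].
split; last by move=> y /(Forall2_In_r ws_ys) [w [_ [_ [pass0 [-> node_w]]]]].
apply: (ForallOrdPairs_Forall2 _ ws_ys); last exact/uniq_ForallOrdPairs/enum_uniq.
move=> w w' y y' [_ [pass0 [yw node_w]]] [_ [pass0' [yw' node_w']]] neq orbit.
by apply: neq; rewrite -yw -yw'; apply: same_orbit_wleft; rewrite ?yw ?yw'.
Qed.

(* A return to the root yields a periodic point, which is a further orbit. *)
Lemma returns_orbit J N (ys : list (Z -> A)) : 0 < \sum_(n < N) returns J n ->
  (forall y, In y ys -> passes J y 0 /\ node J (wleft N y)) ->
  exists pi, C pi /\ Forall (fun y => ~ same_orbit pi y) ys.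
Proof.
move=> /sum_nat_gt0_exists [n /returns_gt0 [per _]] ys_nodes.
have [pi [Cpi [_ pi_per]]] := periodic_point (ltn0Sn n) per.
exists pi; split => //; apply/Forall_forall => y /ys_nodes [pass0 node_y].
exact: periodic_not_same_orbit (ltn0Sn n) (ltn_ord n) pi_per pass0 node_y.
Qed.

Lemma in_Cplus_ellC u : 1 < ellC C u -> in_Cplus u.
Proof.
rewrite ellC_sum => /ltnW /sum_nat_gt0_exists [a].
by case: (pboolP (extends u a)) => // /in_Cplus_extends.
Qed.

Lemma node_words_eventually (L : list (nat -> A)) : (forall u, In u L -> 1 < ellC C u) ->
  exists J N0, forall N, N0 <= N -> forall u, In u L ->
    exists n, n < N /\ exists w : word n, node J w /\ wcat w (base J) = u.
Proof.
move=> L_LS; have L_C u (u_in : In u L) := in_Cplus_ellC (L_LS u u_in).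
have [J reach] : exists J, forall u, In u L -> exists t, sdrop t u = base J.
  suff [J ev] : exists J0, forall J, J0 <= J -> forall u, In u L -> exists t, sdrop t u = base J.
    by exists J; exact: ev.
  apply: eventually_forall_In => u /L_C [x [Cx xu]].
  have [I [j0 pass]] := passes_eventually Cx.
  exists (maxn I (Z.to_nat (- j0))) => J; rewrite geq_max => /andP[le_IJ le_j0J].
  exists (Z.to_nat (j0 + Z.of_nat J)); apply: functional_extensionality => n.
  by rewrite /sdrop -xu -(pass J le_IJ n); congr x; lia.
exists J; apply: eventually_forall_In => u u_in; have [t drop_t] := reach u u_in.
have [n [w [_ [node_w wu]]]] := node_of_in_Cplus (L_C u u_in) drop_t.
by exists n.+1 => N le_nN; exists n; split => //; exists w.
Qed.

Theorem orbits_ge_branching (L : list (nat -> A)) :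
  ForallOrdPairs (fun u v => ~ ext_eq u v) L -> (forall u, In u L -> 1 < ellC C u) ->
  exists l, (sumn (List.map branching L)).+1 <= length l /\ Forall C l /\
    ForallOrdPairs (fun x y => ~ same_orbit x y) l.
Proof.
move=> L_dist L_LS.
have [J [N0 L_nodes]] := node_words_eventually L_LS.
have [N [le_N0N per_N]] := period_le_eventually J N0.
have [ys [ys_len [ys_C [ys_dist ys_nodes]]]] := node_orbits per_N.
have := nnodes_telescope J N; have := branching_total_ge L_dist (L_nodes N le_N0N).
have := sum_returns_le1 J N; rewrite /branching_total -ys_len.
have [->|/returns_orbit/(_ ys_nodes) [pi [Cpi pi_ys]]] := posnP (\sum_(n < N) returns J n).
  by exists ys; split => //; lia.
by exists (pi :: ys); split; [rewrite /=; lia|split; constructor].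
Qed.

Lemma length_le_orbit_card m l : orbit_card C m -> Forall C l ->
  ForallOrdPairs (fun x y => ~ same_orbit x y) l -> length l <= m.
Proof.
move=> [lc [<- [_ [_ cover]]]] /Forall_forall l_C l_dist.
apply: (length_le_cover same_orbit_sym same_orbit_trans l_dist) => x /l_C /cover.
by move/Exists_exists => [y [y_in xy]]; exists y.
Qed.

Lemma orbit_card_uniq m m' : orbit_card C m -> orbit_card C m' -> m = m'.
Proof.
move=> card_m card_m'.
have [l [len_l [l_C [l_dist _]]]] := card_m; have [l' [len_l' [l'_C [l'_dist _]]]] := card_m'.
have := length_le_orbit_card card_m' l_C l_dist.
have := length_le_orbit_card card_m l'_C l'_dist; lia.
Qed.

Lemma orbit_card_of_LS_sum n : LS_sum C n -> orbit_card C n.+1.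
Proof.
move=> [L [L_dist [L_LS [L_cover <-]]]].
have [l [le_l [l_C l_dist]]] := orbits_ge_branching L_dist L_LS.
have le_l' := orbits_le_branching L_cover l_C l_dist.
exists l; split; first by apply/eqP; rewrite eqn_leq le_l le_l'.
do 2 split => //; move=> x Cx; apply: NNPP => x_new.
have xl_dist : ForallOrdPairs (fun x y => ~ same_orbit x y) (x :: l).
  by constructor => //; exact: (proj2 (Forall_Exists_neg _ _) x_new).
have /= := orbits_le_branching L_cover (Forall_cons x Cx l_C) xl_dist.
by rewrite /branching in le_l *; lia.
Qed.

(* The lists of distinct words of [LS_omega(C)] have lengths bounded by the number of
   orbits, so a maximal one exists and enumerates [LS_omega(C)]. *)
Lemma LS_sum_of_orbit_card m : orbit_card C m -> exists n, LS_sum C n.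
Proof.
move=> card_m.
pose LS_list k := pbool (exists L, ForallOrdPairs (fun u v => ~ ext_eq u v) L /\
   (forall u, In u L -> 1 < ellC C u) /\ length L = k).
have ex0 : exists k, LS_list k by exists 0; apply: pbool_true; exists nil; split; [constructor|split].
have ub : forall k, LS_list k -> k <= m.
  move=> k /pboolP [L [L_dist [L_LS <-]]].
  have [l [le_l [l_C l_dist]]] := orbits_ge_branching L_dist L_LS.
  apply: leq_trans (length_le_orbit_card card_m l_C l_dist); apply: leq_trans le_l.
  elim: L L_LS {L_dist} => //= u L IH L_LS; have := L_LS u (or_introl erefl).
  by have := IH (fun v v_in => L_LS v (or_intror v_in)); rewrite /branching; lia.
case: (ex_maxnP ex0 ub) => k /pboolP [L [L_dist [L_LS L_len]]] max_k.
exists (sumn (List.map branching L)), L; do 3 split => //.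
move=> u u_LS; apply: NNPP => u_new.
have : LS_list k.+1.
  apply: pbool_true; exists (u :: L); split.
    by constructor => //; apply/Forall_forall => v v_in uv; apply: u_new; exists v.
  split; last by rewrite /= L_len.
  by move=> v [<-|v_in]; [|exact: L_LS].
by move/max_k; rewrite ltnn.
Qed.

End AsymptoticClass.

Theorem mainTheorem5 (A : finType) (X C : (Z -> A) -> Prop)
  (HX : shift_space X) (HC : right_asym_class X C) :
  forall w : option nat, omega_is C w <-> LS_sum_is C w.
Proof.
have [[x0 [X_x0 C_def]] _] := HC.
have LS_card := orbit_card_of_LS_sum HX X_x0 C_def.
have card_LS := LS_sum_of_orbit_card HX X_x0 C_def.
case=> [n|] /=; split.
- move=> card_n; have [n' LS_n'] := card_LS _ card_n.
  by have [->] := orbit_card_uniq card_n (LS_card _ LS_n').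
- exact: LS_card.
- by move=> no_card m /LS_card /no_card.
- by move=> no_LS m /card_LS [n LS_n]; apply: (no_LS n).
Qed.
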